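(* Let $a,b,h\in\mathbb{R}$ with $h>0$ and $\frac{b-a}{h}\in\mathbb{N}\setminus\{1\}$. Suppose $w:[a,b]_h\to\mathbb{R}$ satisfies $$-D_h^+D_h^-w(x)\le\lambda_{0,h}w(x)\ \ (x\in(a,b)_h),\qquad w(a)\le0,\ w(b)\le0,$$ for some $\lambda_{0,h}<\lambda_{1,h}:=\frac{4}{h^2}\sin^2\big(\frac{\pi h}{2(b-a)}\big)$. Then $w(x)\le0$ for all $x\in[a,b]_h$.
   Context: $[a,b]_h=[a,b]\cap(a+h\mathbb{Z})$ and $(a,b)_h=(a,b)\cap(a+h\mathbb{Z})$ (the grid points). $D_h^+w(x)=\frac{w(x+h)-w(x)}{h}$, $D_h^-w(x)=\frac{w(x)-w(x-h)}{h}$, so $D_h^+D_h^-w(x)=\frac{w(x+h)-2w(x)+w(x-h)}{h^2}$. *)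

From Stdlib Require Import Reals ZArith.
Open Scope R_scope.

Definition grid_closed (a b h x : R) : Prop :=
  a <= x <= b /\ exists k : Z, x = a + IZR k * h.

Definition grid_open (a b h x : R) : Prop :=
  a < x < b /\ exists k : Z, x = a + IZR k * h.

Definition Dplus (h : R) (w : R -> R) (x : R) : R := (w (x + h) - w x) / h.
Definition Dminus (h : R) (w : R -> R) (x : R) : R := (w x - w (x - h)) / h.

Definition D2 (h : R) (w : R -> R) (x : R) : R := Dplus h (Dminus h w) x.

Definition lambda1 (a b h : R) : R :=
  4 / h ^ 2 * (sin (PI * h / (2 * (b - a)))) ^ 2.

From Pilot Require Import Defs.
From Stdlib Require Import Reals ZArith Lra Lia Psatz.
Open Scope R_scope.

(* The sine mode phi_k = sin (pi k / N) vanishes at both ends, is positive inside,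
   and is an eigenvector of the discrete Laplacian with eigenvalue
   2 - 2 cos (pi / N) = h^2 lambda_1.  If u_k = w (a + k h) were positive somewhere,
   scale phi to touch u from above at an interior point m, i.e. take m maximising
   u_k / phi_k.  At m the second difference of u dominates that of t phi, so
   h^2 lambda_1 u_m <= 2 u_m - u_(m+1) - u_(m-1) <= h^2 lambda_0 u_m with u_m > 0,
   contradicting lambda_0 < lambda_1. *)

Lemma exists_argmax_nat (f : nat -> R) (m n : nat) : (m <= n)%nat ->
  exists k, (m <= k <= n)%nat /\ forall j, (m <= j <= n)%nat -> f j <= f k.
Proof.
  induction n as [|n IHn]; intros Hmn.
  - exists m; split; [lia|]; intros j Hj; replace j with m by lia; lra.
  - destruct (Nat.eq_dec m (S n)) as [<-|Hne].
    + exists m; split; [lia|]; intros j Hj; replace j with m by lia; lra.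
    + destruct IHn as [k [Hk Hmax]]; [lia|].
      destruct (Rle_dec (f (S n)) (f k)).
      * exists k; split; [lia|]; intros j Hj.
        destruct (Nat.eq_dec j (S n)) as [->|]; [lra|apply Hmax; lia].
      * exists (S n); split; [lia|]; intros j Hj.
        destruct (Nat.eq_dec j (S n)) as [->|]; [lra|].
        specialize (Hmax j ltac:(lia)); lra.
Qed.

Definition sin_mode (N k : nat) : R := sin (PI * INR k / INR N).

Lemma sin_mode_0 N : sin_mode N 0 = 0.
Proof. unfold sin_mode; simpl; unfold Rdiv; rewrite Rmult_0_r, Rmult_0_l; apply sin_0. Qed.

Lemma sin_mode_N N : (0 < N)%nat -> sin_mode N N = 0.
Proof.
  intros HN; assert (0 < INR N) by (apply lt_0_INR; lia).
  unfold sin_mode; replace (PI * INR N / INR N) with PI by (field; lra); apply sin_PI.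
Qed.

Lemma sin_mode_pos N k : (0 < k < N)%nat -> 0 < sin_mode N k.
Proof.
  intros Hk.
  assert (0 < INR k) by (apply lt_0_INR; lia).
  assert (INR k < INR N) by (apply lt_INR; lia).
  pose proof PI_RGT_0.
  unfold sin_mode; apply sin_gt_0.
  - apply Rdiv_lt_0_compat; nra.
  - apply Rmult_lt_reg_r with (INR N); [lra|].
    replace (PI * INR k / INR N * INR N) with (PI * INR k) by (field; lra); nra.
Qed.

Lemma sin_mode_second_difference N j :
  2 * sin_mode N (S j) - sin_mode N (S (S j)) - sin_mode N j
  = (2 - 2 * cos (PI / INR N)) * sin_mode N (S j).
Proof.
  unfold sin_mode.
  set (A := PI * INR (S j) / INR N); set (B := PI / INR N).
  replace (PI * INR (S (S j)) / INR N) with (A + B)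
    by (unfold A, B, Rdiv; rewrite (S_INR (S j)); ring).
  replace (PI * INR j / INR N) with (A - B)
    by (unfold A, B, Rdiv; rewrite (S_INR j); ring).
  rewrite sin_plus, sin_minus; ring.
Qed.

Lemma lambda1_mul_sqr a b h N : 0 < h -> (0 < N)%nat -> b - a = INR N * h ->
  lambda1 a b h * h ^ 2 = 2 - 2 * cos (PI / INR N).
Proof.
  intros Hh HN Hba; assert (0 < INR N) by (apply lt_0_INR; lia).
  unfold lambda1; rewrite Hba.
  replace (PI * h / (2 * (INR N * h))) with (PI / INR N / 2) by (field; lra).
  replace (PI / INR N) with (2 * (PI / INR N / 2)) at 2 by (field; lra).
  rewrite cos_2a_sin; field; lra.
Qed.

Lemma discrete_maximum_principle (N : nat) (u : nat -> R) (mu : R) :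
  (2 <= N)%nat -> u 0%nat <= 0 -> u N <= 0 ->
  (forall j, (S j < N)%nat -> 2 * u (S j) - u (S (S j)) - u j <= mu * u (S j)) ->
  mu < 2 - 2 * cos (PI / INR N) ->
  forall n, (n <= N)%nat -> u n <= 0.
Proof.
  intros HN Hu0 HuN Hdiff Hmu n Hn.
  destruct (Rle_dec (u n) 0) as [|Hun]; [assumption|exfalso].
  apply Rnot_le_lt in Hun.
  assert (Hnin : (0 < n < N)%nat).
  { destruct (Nat.eq_dec n 0) as [->|]; [lra|].
    destruct (Nat.eq_dec n N) as [->|]; [lra|lia]. }
  destruct (exists_argmax_nat (fun j => u j / sin_mode N j) 1 (N - 1))
    as [m [Hm Hmax]]; [lia|]; simpl in Hmax.
  set (t := u m / sin_mode N m) in Hmax.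
  assert (Hmode_m : 0 < sin_mode N m) by (apply sin_mode_pos; lia).
  assert (Ht : 0 < t).
  { specialize (Hmax n ltac:(lia)).
    assert (0 < u n / sin_mode N n) by (apply Rdiv_lt_0_compat, sin_mode_pos; auto).
    lra. }
  assert (Hbelow : forall j, (j <= N)%nat -> u j <= t * sin_mode N j).
  { intros j Hj.
    destruct (Nat.eq_dec j 0) as [->|]; [rewrite sin_mode_0; lra|].
    destruct (Nat.eq_dec j N) as [->|]; [rewrite sin_mode_N by lia; lra|].
    assert (Hmode_j : 0 < sin_mode N j) by (apply sin_mode_pos; lia).
    specialize (Hmax j ltac:(lia)).
    apply (Rmult_le_compat_r (sin_mode N j)) in Hmax; [|lra].
    replace (u j / sin_mode N j * sin_mode N j) with (u j) in Hmax by (field; lra).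
    lra. }
  assert (Htouch : u m = t * sin_mode N m) by (unfold t; field; lra).
  destruct m as [|p]; [lia|].
  pose proof (Hbelow (S (S p)) ltac:(lia)); pose proof (Hbelow p ltac:(lia)).
  pose proof (Hdiff p ltac:(lia)); pose proof (sin_mode_second_difference N p).
  assert (0 < t * sin_mode N (S p)) by (apply Rmult_lt_0_compat; lra).
  nra.
Qed.

Lemma grid_closed_index a b h N x : 0 < h -> b - a = INR N * h ->
  grid_closed a b h x -> exists n, (n <= N)%nat /\ x = a + INR n * h.
Proof.
  intros Hh Hba [[Hax Hxb] [k Hk]].
  assert (Hk0 : (0 <= k)%Z) by (apply le_IZR; nra).
  exists (Z.to_nat k).
  rewrite INR_IZR_INZ, Z2Nat.id by exact Hk0.
  split; [|exact Hk].
  apply Nat2Z.inj_le; rewrite Z2Nat.id by exact Hk0.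
  apply le_IZR; rewrite <- INR_IZR_INZ; nra.
Qed.

Lemma grid_open_index a b h N j : 0 < h -> b - a = INR N * h ->
  (0 < j < N)%nat -> grid_open a b h (a + INR j * h).
Proof.
  intros Hh Hba Hj.
  assert (0 < INR j) by (apply lt_0_INR; lia).
  assert (INR j < INR N) by (apply lt_INR; lia).
  split; [nra|].
  exists (Z.of_nat j); rewrite <- INR_IZR_INZ; reflexivity.
Qed.

Lemma D2_mul_sqr h w x : h <> 0 ->
  D2 h w x * h ^ 2 = w (x + h) - 2 * w x + w (x - h).
Proof.
  intros Hh; unfold D2, Dplus, Pilot.Defs.Dminus.
  replace (x + h - h) with x by ring; field; exact Hh.
Qed.

Theorem mainTheorem10 (a b h : R) (N : nat) (lam0 : R) (w : R -> R) :
  0 < h ->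
  (b - a) / h = INR N ->
  N <> 1%nat ->
  (forall x, grid_open a b h x -> - D2 h w x <= lam0 * w x) ->
  w a <= 0 -> w b <= 0 ->
  lam0 < lambda1 a b h ->
  forall x, grid_closed a b h x -> w x <= 0.
Proof.
  intros Hh HN HN1 Hint Ha Hb Hlam x Hx.
  assert (Hba : b - a = INR N * h) by (rewrite <- HN; field; lra).
  destruct (grid_closed_index a b h N x Hh Hba Hx) as [n [Hn ->]].
  destruct (Nat.eq_dec N 0) as [->|HN0].
  { replace n with 0%nat by lia; simpl; rewrite Rmult_0_l, Rplus_0_r; exact Ha. }
  apply (discrete_maximum_principle N (fun j => w (a + INR j * h)) (lam0 * h ^ 2));
    cbv beta; try lia.
  - rewrite Rmult_0_l, Rplus_0_r; exact Ha.
  - replace (a + INR N * h) with b by lra; exact Hb.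
  - intros j Hj.
    pose proof (Hint _ (grid_open_index a b h N (S j) Hh Hba ltac:(lia))) as Hineq.
    pose proof (D2_mul_sqr h w (a + INR (S j) * h) ltac:(lra)) as HD.
    replace (a + INR (S j) * h + h) with (a + INR (S (S j)) * h) in HD
      by (rewrite (S_INR (S j)); ring).
    replace (a + INR (S j) * h - h) with (a + INR j * h) in HD
      by (rewrite (S_INR j); ring).
    apply (Rmult_le_compat_r (h ^ 2)) in Hineq; [|nra].
    rewrite Ropp_mult_distr_l_reverse, HD in Hineq.
    lra.
  - rewrite <- (lambda1_mul_sqr a b h N Hh ltac:(lia) Hba).
    apply Rmult_lt_compat_r; nra.
Qed.
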